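(* Let $U\subset\mathbb{C}$ be open, let $f:U\to\mathbb{C}^N$ be a nonconstant holomorphic map, and let $f_j=P_+^jf$ and $P_j$ be as in the context. Let $0\le k\le N-2$ and assume $f_0,\dots,f_k$ vanish nowhere on $U$. Consider the matrix-valued $1$-form on $U$ $$\omega_k=i\big(-[\partial P_k,P_k]\,d\xi+[\bar\partial P_k,P_k]\,d\bar\xi\big).$$ Then $$\omega_k=d\Big(-i\big(P_k+2\sum_{j=0}^{k-1}P_j\big)\Big)$$ (the sum being empty when $k=0$). Consequently the generalized Weierstrass immersion $X_k(\xi,\bar\xi)=\int_\gamma\omega_k$ (with $\gamma$ a curve in $U$ ending at $\xi$) is path-independent on simply connected $U$ and equals $$X_k(\xi,\bar\xi)=-i\Big(P_k+2\sum_{j=0}^{k-1}P_j\Big)$$ up to an additive constant matrix.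
   Context: Let $\xi$ be the complex coordinate on $\mathbb{C}$, $\partial=\partial/\partial\xi$, $\bar\partial=\partial/\partial\bar\xi$, and $[A,B]=AB-BA$. For a column vector $g\in\mathbb{C}^N$, $g^\dagger$ is its conjugate transpose. For a smooth map $g:U\to\mathbb{C}^N$ with $g^\dagger g\neq 0$ on $U$, define $$P_+g=\partial g-g\,\frac{g^\dagger\partial g}{g^\dagger g}.$$ Given a nonconstant holomorphic $f:U\to\mathbb{C}^N$ (i.e. $\bar\partial f=0$), set $f_0=f$ and $f_{j}=P_+ f_{j-1}=P_+^{j}f$ (defined as long as $f_{j-1}$ vanishes nowhere on $U$). For each $j$ with $f_j$ nowhere zero, define the rank-one Hermitian orthogonal projector $$P_j=\frac{f_j f_j^\dagger}{f_j^\dagger f_j}.$$ These projectors solve the $\mathbb{C}P^{N-1}$ sigma model equations $\partial[\bar\partial P_j,P_j]+\bar\partial[\partial P_j,P_j]=0$. *)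

From Stdlib Require Import Reals ClassicalEpsilon List.
Open Scope R_scope.

Record Cx : Type := mkC { re : R ; im : R }.

Definition C0 : Cx := mkC 0 0.
Definition CR (r : R) : Cx := mkC r 0.
Definition Ci : Cx := mkC 0 1.
Definition Cadd (z w : Cx) : Cx := mkC (re z + re w) (im z + im w).
Definition Copp (z : Cx) : Cx := mkC (- re z) (- im z).
Definition Csub (z w : Cx) : Cx := Cadd z (Copp w).
Definition Cmul (z w : Cx) : Cx :=
  mkC (re z * re w - im z * im w) (re z * im w + im z * re w).
Definition Cconj (z : Cx) : Cx := mkC (re z) (- im z).
Definition Cinv (z : Cx) : Cx :=
  mkC (re z / (re z * re z + im z * im z)) (- im z / (re z * re z + im z * im z)).
Definition Cdiv (z w : Cx) : Cx := Cmul z (Cinv w).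
Definition Cnorm (z : Cx) : R := sqrt (re z * re z + im z * im z).

Fixpoint Csum (n : nat) (F : nat -> Cx) : Cx :=
  match n with
  | O => C0
  | S m => Cadd (Csum m F) (F m)
  end.

(** * Vectors in Cx^N and N x N matrices (only indices < N are meaningful) *)
Definition Vec := nat -> Cx.
Definition Mat := nat -> nat -> Cx.

Definition inner (N : nat) (g h : Vec) : Cx :=
  Csum N (fun b => Cmul (Cconj (g b)) (h b)).
Definition mmul (N : nat) (A B : Mat) : Mat :=
  fun a b => Csum N (fun c => Cmul (A a c) (B c b)).
Definition comm (N : nat) (A B : Mat) : Mat :=
  fun a b => Csub (mmul N A B a b) (mmul N B A a b).

Definition is_open (U : Cx -> Prop) : Prop :=
  forall z, U z -> exists r, 0 < r /\ forall w, Cnorm (Csub w z) < r -> U w.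

Definition is_connected (U : Cx -> Prop) : Prop :=
  forall V W : Cx -> Prop, is_open V -> is_open W ->
    (forall z, U z -> V z \/ W z) ->
    (forall z, U z -> V z -> W z -> False) ->
    (exists z, U z /\ V z) -> (exists z, U z /\ W z) -> False.

Definition cont_at (F : Cx -> Cx) (z : Cx) : Prop :=
  forall eps, 0 < eps -> exists del, 0 < del /\
    forall w, Cnorm (Csub w z) < del -> Cnorm (Csub (F w) (F z)) < eps.

Definition has_pdx (F : Cx -> Cx) (z l : Cx) : Prop :=
  derivable_pt_lim (fun t => re (F (mkC t (im z)))) (re z) (re l) /\
  derivable_pt_lim (fun t => im (F (mkC t (im z)))) (re z) (im l).
Definition has_pdy (F : Cx -> Cx) (z l : Cx) : Prop :=
  derivable_pt_lim (fun t => re (F (mkC (re z) t))) (im z) (re l) /\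
  derivable_pt_lim (fun t => im (F (mkC (re z) t))) (im z) (im l).

Definition has_pd (d : bool) : (Cx -> Cx) -> Cx -> Cx -> Prop :=
  if d then has_pdx else has_pdy.

(** the partial derivative as a total operator (its value is only meaningful
    where the derivative exists) *)
Definition pd (d : bool) (F : Cx -> Cx) (z : Cx) : Cx :=
  epsilon (inhabits C0) (fun l => has_pd d F z l).

(** Wirtinger derivatives  ∂ = (∂x - i ∂y)/2,  ∂bar = (∂x + i ∂y)/2 *)
Definition wd (F : Cx -> Cx) (z : Cx) : Cx :=
  Cmul (CR (/2)) (Csub (pd true F z) (Cmul Ci (pd false F z))).
Definition wdbar (F : Cx -> Cx) (z : Cx) : Cx :=
  Cmul (CR (/2)) (Cadd (pd true F z) (Cmul Ci (pd false F z))).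

Definition iterpd (w : list bool) (F : Cx -> Cx) : Cx -> Cx :=
  fold_right (fun d G => pd d G) F w.

Definition smooth_on (U : Cx -> Prop) (F : Cx -> Cx) : Prop :=
  (forall (w : list bool) (d : bool) (z : Cx), U z -> exists l, has_pd d (iterpd w F) z l) /\
  (forall (w : list bool) (z : Cx), U z -> cont_at (iterpd w F) z).

Definition smooth_vec (N : nat) (U : Cx -> Prop) (f : Cx -> Vec) : Prop :=
  forall a, (a < N)%nat -> smooth_on U (fun z => f z a).

Definition holomorphic_on (N : nat) (U : Cx -> Prop) (f : Cx -> Vec) : Prop :=
  smooth_vec N U f /\
  forall z a, U z -> (a < N)%nat -> wdbar (fun w => f w a) z = C0.

Definition nonconstant_on (N : nat) (U : Cx -> Prop) (f : Cx -> Vec) : Prop :=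
  exists z1 z2 a, U z1 /\ U z2 /\ (a < N)%nat /\ f z1 a <> f z2 a.

Definition Pplus (N : nat) (g : Cx -> Vec) : Cx -> Vec :=
  fun z a =>
    Csub (wd (fun w => g w a) z)
         (Cmul (g z a)
               (Cdiv (inner N (g z) (fun b => wd (fun w => g w b) z))
                     (inner N (g z) (g z)))).

Definition fj (N : nat) (f : Cx -> Vec) (j : nat) : Cx -> Vec :=
  Nat.iter j (Pplus N) f.

Definition nowhere_zero_on (N : nat) (U : Cx -> Prop) (g : Cx -> Vec) : Prop :=
  forall z, U z -> exists a, (a < N)%nat /\ g z a <> C0.

Definition Pj (N : nat) (f : Cx -> Vec) (j : nat) : Cx -> Mat :=
  fun z a b =>
    Cdiv (Cmul (fj N f j z a) (Cconj (fj N f j z b)))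
         (inner N (fj N f j z) (fj N f j z)).

Definition mwd (F : Cx -> Mat) (z : Cx) : Mat := fun a b => wd (fun w => F w a b) z.
Definition mwdbar (F : Cx -> Mat) (z : Cx) : Mat := fun a b => wdbar (fun w => F w a b) z.

(** omega_k = A dxi + Abar dxibar with
    A = i(-[∂P_k,P_k]),  Abar = i[∂bar P_k,P_k] *)
Definition omega_dxi (N : nat) (f : Cx -> Vec) (k : nat) : Cx -> Mat :=
  fun z a b => Cmul Ci (Copp (comm N (mwd (Pj N f k) z) (Pj N f k z) a b)).
Definition omega_dxibar (N : nat) (f : Cx -> Vec) (k : nat) : Cx -> Mat :=
  fun z a b => Cmul Ci (comm N (mwdbar (Pj N f k) z) (Pj N f k z) a b).

Definition Phi (N : nat) (f : Cx -> Vec) (k : nat) : Cx -> Mat :=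
  fun z a b =>
    Cmul (Copp Ci)
         (Cadd (Pj N f k z a b) (Cmul (CR 2) (Csum k (fun j => Pj N f j z a b)))).

(** "A dxi + Abar dxibar = dF on U" (entrywise for indices < N):
    F has partials F_x, F_y with  A = (F_x - i F_y)/2 = ∂F,
    Abar = (F_x + i F_y)/2 = ∂bar F. *)
Definition is_d_of (N : nat) (U : Cx -> Prop) (F A Abar : Cx -> Mat) : Prop :=
  forall z a b, U z -> (a < N)%nat -> (b < N)%nat ->
    exists lx ly,
      has_pdx (fun w => F w a b) z lx /\ has_pdy (fun w => F w a b) z ly /\
      A z a b = Cmul (CR (/2)) (Csub lx (Cmul Ci ly)) /\
      Abar z a b = Cmul (CR (/2)) (Cadd lx (Cmul Ci ly)).

From Stdlib Require Import Reals.
From Stdlib Require Import Lra Lia Psatz Field List.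
From Stdlib Require Import ClassicalEpsilon FunctionalExtensionality PropExtensionality Classical.
Open Scope R_scope.

(** With n_j = f_j^dagger f_j, alpha_j = f_j^dagger ∂f_j / n_j (so that
    f_{j+1} = ∂f_j - alpha_j f_j) and A_j = f_{j+1} f_j^dagger / n_j:
    (1) f_{j+1} ⊥ f_j, and by induction ∂bar f_j = -(n_j/n_{j-1}) f_{j-1};
    (2) hence ∂P_j = A_j - A_{j-1} and [∂P_j, P_j] = A_j + A_{j-1};
    (3) telescoping, ∂(P_k + 2 Σ_{j<k} P_j) = A_k + A_{k-1} = [∂P_k, P_k]: this
        is the dξ-part of ω_k = d(-i(P_k + 2 Σ_{j<k} P_j)), and the dξbar-part
        follows by taking adjoints, all matrices being (anti-)Hermitian;
    (4) two primitives of ω_k differ by a map with zero partial derivatives,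
        hence by a constant on a connected open set (mean value theorem). *)

Lemma Cx_eq (z w : Cx) : re z = re w -> im z = im w -> z = w.
Proof. destruct z, w; simpl; intros; subst; reflexivity. Qed.

(** reduce an identity between complex numbers to two real identities *)
Ltac cx := repeat match goal with z : Cx |- _ => destruct z end;
  apply Cx_eq; unfold Cadd, Cmul, Csub, Copp, Cconj, CR, C0, Ci, Cinv, Cdiv in *; simpl.

Lemma Cx_ring : ring_theory C0 (CR 1) Cadd Cmul Csub Copp (@eq Cx).
Proof. constructor; intros; cx; ring. Qed.

Lemma Cx_field : field_theory C0 (CR 1) Cadd Cmul Csub Copp Cdiv Cinv (@eq Cx).
Proof.
  constructor.
  - exact Cx_ring.
  - intro H. assert (E : re C0 = re (CR 1)) by (rewrite H; reflexivity). simpl in E. lra.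
  - reflexivity.
  - intros [a b] Hp.
    assert (a * a + b * b <> 0) by (intro E; apply Hp; unfold C0; f_equal; nra).
    apply Cx_eq; unfold Cmul, Cinv, CR; simpl; field; auto.
Qed.

Add Field Cfield : Cx_field.

Lemma CR1_neq_C0 : CR 1 <> C0.
Proof. exact (F_1_neq_0 Cx_field). Qed.

Lemma Cconj_add a b : Cconj (Cadd a b) = Cadd (Cconj a) (Cconj b).
Proof. cx; ring. Qed.
Lemma Cconj_mul a b : Cconj (Cmul a b) = Cmul (Cconj a) (Cconj b).
Proof. cx; ring. Qed.
Lemma Cconj_opp a : Cconj (Copp a) = Copp (Cconj a).
Proof. cx; ring. Qed.
Lemma Cconj_sub a b : Cconj (Csub a b) = Csub (Cconj a) (Cconj b).
Proof. cx; ring. Qed.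
Lemma Cconj_inv a : Cconj (Cinv a) = Cinv (Cconj a).
Proof. cx; replace (- im * - im) with (im * im) by ring; unfold Rdiv; ring. Qed.
Lemma Cconj_div a b : Cconj (Cdiv a b) = Cdiv (Cconj a) (Cconj b).
Proof. unfold Cdiv. rewrite Cconj_mul, Cconj_inv. reflexivity. Qed.
Lemma Cconj_CR r : Cconj (CR r) = CR r.
Proof. cx; ring. Qed.
Lemma Cconj_C0 : Cconj C0 = C0.
Proof. cx; ring. Qed.
Lemma Cconj_Ci : Cconj Ci = Copp Ci.
Proof. cx; ring. Qed.
Lemma Cconj_involutive a : Cconj (Cconj a) = a.
Proof. cx; ring. Qed.

Hint Rewrite Cconj_add Cconj_mul Cconj_opp Cconj_sub Cconj_inv Cconj_div
  Cconj_CR Cconj_C0 Cconj_Ci Cconj_involutive : cconj.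

Lemma Cconj_real a : im a = 0 -> Cconj a = a.
Proof. destruct a; simpl; intros; subst; cx; ring. Qed.

Lemma Csum_ext n F G : (forall i, (i < n)%nat -> F i = G i) -> Csum n F = Csum n G.
Proof.
  induction n; simpl; intros H; auto.
  rewrite IHn by (intros; apply H; lia). rewrite H by lia. reflexivity.
Qed.
Lemma Csum_add n F G : Csum n (fun i => Cadd (F i) (G i)) = Cadd (Csum n F) (Csum n G).
Proof. induction n; simpl. cx; ring. rewrite IHn. ring. Qed.
Lemma Csum_scal n s F : Csum n (fun i => Cmul s (F i)) = Cmul s (Csum n F).
Proof. induction n; simpl. cx; ring. rewrite IHn. ring. Qed.
Lemma Csum_sub n F G : Csum n (fun i => Csub (F i) (G i)) = Csub (Csum n F) (Csum n G).
Proof. induction n; simpl. cx; ring. rewrite IHn. ring. Qed.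
Lemma Csum_conj n F : Cconj (Csum n F) = Csum n (fun i => Cconj (F i)).
Proof. induction n; simpl. cx; ring. rewrite Cconj_add, IHn. reflexivity. Qed.

Lemma inner_ext N g g' h h' :
  (forall c, (c < N)%nat -> g c = g' c) -> (forall c, (c < N)%nat -> h c = h' c) ->
  inner N g h = inner N g' h'.
Proof. intros Hg Hh. apply Csum_ext. intros c Hc. rewrite Hg, Hh by auto. reflexivity. Qed.

Lemma inner_conj N g h : Cconj (inner N g h) = inner N h g.
Proof. unfold inner. rewrite Csum_conj. apply Csum_ext. intros. autorewrite with cconj. ring. Qed.

Lemma inner_ext_l N g g' h : (forall c, (c < N)%nat -> g c = g' c) -> inner N g h = inner N g' h.
Proof. intros Hg. apply inner_ext; auto. Qed.
Lemma inner_ext_r N g h h' : (forall c, (c < N)%nat -> h c = h' c) -> inner N g h = inner N g h'.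
Proof. intros Hh. apply inner_ext; auto. Qed.

Lemma inner_add_r N g h h' :
  inner N g (fun c => Cadd (h c) (h' c)) = Cadd (inner N g h) (inner N g h').
Proof. unfold inner. rewrite <- Csum_add. apply Csum_ext. intros. ring. Qed.
Lemma inner_scal_r N g h s : inner N g (fun c => Cmul s (h c)) = Cmul s (inner N g h).
Proof. unfold inner. rewrite <- Csum_scal. apply Csum_ext. intros. ring. Qed.
Lemma inner_add_l N g g' h :
  inner N (fun c => Cadd (g c) (g' c)) h = Cadd (inner N g h) (inner N g' h).
Proof. rewrite <- inner_conj, inner_add_r, Cconj_add, !inner_conj. reflexivity. Qed.
Lemma inner_scal_l N g h s : inner N (fun c => Cmul s (g c)) h = Cmul (Cconj s) (inner N g h).
Proof. rewrite <- inner_conj, inner_scal_r, Cconj_mul, inner_conj. reflexivity. Qed.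

Lemma inner_zero_l N h : inner N (fun _ => C0) h = C0.
Proof.
  unfold inner. rewrite (Csum_ext N _ (fun _ => Cmul C0 C0)) by (intros; cx; ring).
  rewrite Csum_scal. ring.
Qed.

Lemma inner_self_real N g : im (inner N g g) = 0.
Proof. unfold inner. induction N; simpl. reflexivity. simpl in IHN. rewrite IHN. ring. Qed.

Lemma inner_self_conj N g : Cconj (inner N g g) = inner N g g.
Proof. apply Cconj_real, inner_self_real. Qed.

Lemma inner_self_nonneg N g : 0 <= re (inner N g g).
Proof. unfold inner. induction N; simpl. lra. nra. Qed.

Lemma inner_self_pos N g a : (a < N)%nat -> g a <> C0 -> 0 < re (inner N g g).
Proof.
  unfold inner. induction N; intros Ha Hg; [lia|]. simpl.
  pose proof (inner_self_nonneg N g) as Hnn. unfold inner in Hnn.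
  destruct (Nat.eq_dec a N) as [->|Hne].
  - assert (0 < re (g N) * re (g N) + im (g N) * im (g N)).
    { destruct (g N) as [x y]; simpl.
      assert (~ (x = 0 /\ y = 0)) by (intros [-> ->]; apply Hg; reflexivity). nra. }
    nra.
  - pose proof (IHN ltac:(lia) Hg). nra.
Qed.

Lemma inner_self_nz N g a : (a < N)%nat -> g a <> C0 -> inner N g g <> C0.
Proof.
  intros Ha Hg E. pose proof (inner_self_pos N g a Ha Hg) as P.
  rewrite E in P. simpl in P. lra.
Qed.

Definition rank_one (u v : Vec) (s : Cx) : Mat := fun a b => Cdiv (Cmul (u a) (Cconj (v b))) s.

Lemma mmul_rank_one N (u v w x : Vec) s t a b :
  mmul N (rank_one u v s) (rank_one w x t) a b =
  Cmul (Cmul (inner N v w) (Cmul (u a) (Cconj (x b)))) (Cmul (Cinv s) (Cinv t)).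
Proof.
  unfold mmul, inner, rank_one, Cdiv.
  transitivity (Cmul (Cmul (Cmul (u a) (Cconj (x b))) (Cmul (Cinv s) (Cinv t)))
                     (Csum N (fun c => Cmul (Cconj (v c)) (w c)))); [|ring].
  rewrite <- Csum_scal. apply Csum_ext. intros. ring.
Qed.

Lemma mmul_sub_l N (X Y Z P : Mat) a b :
  (forall c, (c < N)%nat -> X a c = Csub (Y a c) (Z a c)) ->
  mmul N X P a b = Csub (mmul N Y P a b) (mmul N Z P a b).
Proof.
  intros H. unfold mmul. rewrite <- Csum_sub. apply Csum_ext. intros c Hc. rewrite H by auto. ring.
Qed.
Lemma mmul_sub_r N (X Y Z P : Mat) a b :
  (forall c, (c < N)%nat -> X c b = Csub (Y c b) (Z c b)) ->
  mmul N P X a b = Csub (mmul N P Y a b) (mmul N P Z a b).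
Proof.
  intros H. unfold mmul. rewrite <- Csum_sub. apply Csum_ext. intros c Hc. rewrite H by auto. ring.
Qed.

(** If B = A^dagger and P = P^dagger then [B, P] = -[A, P]^dagger.  This
    transfers every ∂-statement about projectors to a ∂bar-statement. *)
Lemma comm_adjoint N (A B P : Mat) a b :
  (forall a c, (a < N)%nat -> (c < N)%nat -> B a c = Cconj (A c a)) ->
  (forall a c, (a < N)%nat -> (c < N)%nat -> P a c = Cconj (P c a)) ->
  (a < N)%nat -> (b < N)%nat ->
  comm N B P a b = Copp (Cconj (comm N A P b a)).
Proof.
  intros HB HP Ha Hb. unfold comm, mmul.
  rewrite Cconj_sub, !Csum_conj.
  rewrite (Csum_ext N (fun c => Cmul (B a c) (P c b)) (fun c => Cconj (Cmul (P b c) (A c a))))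
    by (intros; rewrite HB, HP by auto; autorewrite with cconj; ring).
  rewrite (Csum_ext N (fun c => Cmul (P a c) (B c b)) (fun c => Cconj (Cmul (A b c) (P c a))))
    by (intros; rewrite HB, HP by auto; autorewrite with cconj; ring).
  ring.
Qed.

Lemma has_pd_unique d F z l1 l2 : has_pd d F z l1 -> has_pd d F z l2 -> l1 = l2.
Proof.
  destruct d; simpl; unfold has_pdx, has_pdy; intros [A B] [C D]; apply Cx_eq;
  eapply uniqueness_limite; eauto.
Qed.

Definition ex_pd (d : bool) (F : Cx -> Cx) (z : Cx) : Prop := exists l, has_pd d F z l.

Lemma pd_spec d F z : ex_pd d F z -> has_pd d F z (pd d F z).
Proof. intros H. unfold pd. apply epsilon_spec. exact H. Qed.

Lemma pd_val d F z l : has_pd d F z l -> pd d F z = l.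
Proof. intros H. eapply has_pd_unique; [apply pd_spec; eexists; eauto | exact H]. Qed.

Lemma has_pd_eq d F z l l' : has_pd d F z l -> l = l' -> has_pd d F z l'.
Proof. intros; subst; auto. Qed.

Lemma derivable_pt_lim_eq f x l l' : derivable_pt_lim f x l -> l = l' -> derivable_pt_lim f x l'.
Proof. intros; subst; auto. Qed.

Section Rules.
Variable d : bool.
Variables F G : Cx -> Cx.
Variable z : Cx.

Ltac split_pd := destruct d, z; simpl; unfold has_pdx, has_pdy; simpl.
Ltac derive := repeat first [eassumption | apply derivable_pt_lim_plus
  | apply derivable_pt_lim_minus | apply derivable_pt_lim_mult
  | apply derivable_pt_lim_opp | apply derivable_pt_lim_const].

Lemma has_pd_const c : has_pd d (fun _ => c) z C0.
Proof. split_pd; split; derive. Qed.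

Lemma has_pd_add l1 l2 : has_pd d F z l1 -> has_pd d G z l2 ->
  has_pd d (fun w => Cadd (F w) (G w)) z (Cadd l1 l2).
Proof. split_pd; intros [A B] [C D]; split; derive. Qed.

Lemma has_pd_opp l1 : has_pd d F z l1 -> has_pd d (fun w => Copp (F w)) z (Copp l1).
Proof. split_pd; intros [A B]; split; derive. Qed.

Lemma has_pd_sub l1 l2 : has_pd d F z l1 -> has_pd d G z l2 ->
  has_pd d (fun w => Csub (F w) (G w)) z (Csub l1 l2).
Proof. split_pd; intros [A B] [C D]; split; derive. Qed.

Lemma has_pd_mul l1 l2 : has_pd d F z l1 -> has_pd d G z l2 ->
  has_pd d (fun w => Cmul (F w) (G w)) z (Cadd (Cmul l1 (G z)) (Cmul (F z) l2)).
Proof.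
  split_pd; intros [A B] [C D]; split;
  (eapply derivable_pt_lim_eq; [derive | simpl; ring]).
Qed.

Lemma has_pd_conj l1 : has_pd d F z l1 -> has_pd d (fun w => Cconj (F w)) z (Cconj l1).
Proof. split_pd; intros [A B]; split; derive. Qed.

Lemma has_pd_inv l1 : F z <> C0 -> has_pd d F z l1 ->
  has_pd d (fun w => Cinv (F w)) z (Copp (Cmul l1 (Cmul (Cinv (F z)) (Cinv (F z))))).
Proof.
  intros Hz. assert (Hn : re (F z) * re (F z) + im (F z) * im (F z) <> 0)
    by (intro E; apply Hz; apply Cx_eq; simpl; nra).
  split_pd; intros [A B]; split;
  (eapply derivable_pt_lim_eq;
   [apply derivable_pt_lim_div; [derive | derive | exact Hn]
   | unfold Rsqr; simpl; field; auto]).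
Qed.
End Rules.

Lemma Cnorm_re c : Rabs (re c) <= Cnorm c.
Proof.
  unfold Cnorm. rewrite <- sqrt_Rsqr_abs. apply sqrt_le_1_alt. unfold Rsqr.
  pose proof (Rle_0_sqr (im c)). unfold Rsqr in *. lra.
Qed.
Lemma Cnorm_im c : Rabs (im c) <= Cnorm c.
Proof.
  unfold Cnorm. rewrite <- sqrt_Rsqr_abs. apply sqrt_le_1_alt. unfold Rsqr.
  pose proof (Rle_0_sqr (re c)). unfold Rsqr in *. lra.
Qed.
Lemma Cnorm_le a b : Cnorm (mkC a b) <= Rabs a + Rabs b.
Proof.
  unfold Cnorm; simpl. pose proof (Rabs_pos a); pose proof (Rabs_pos b).
  rewrite <- (sqrt_Rsqr (Rabs a + Rabs b)) by lra. apply sqrt_le_1_alt. unfold Rsqr.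
  assert (a * a = Rabs a * Rabs a) by (rewrite <- Rabs_mult; rewrite Rabs_right; nra).
  assert (b * b = Rabs b * Rabs b) by (rewrite <- Rabs_mult; rewrite Rabs_right; nra).
  nra.
Qed.

Lemma open_square U x y : is_open U -> U (mkC x y) ->
  exists r, 0 < r /\ forall s t, Rabs (s - x) < r -> Rabs (t - y) < r -> U (mkC s t).
Proof.
  intros HU Hz. destruct (HU _ Hz) as [r0 [Hr0 Hb]]. exists (r0 / 2). split; [lra|].
  intros s t Hs Ht. apply Hb. eapply Rle_lt_trans; [apply Cnorm_le|]. simpl.
  unfold Rminus in Hs, Ht. lra.
Qed.

Lemma open_of_squares (V : Cx -> Prop) :
  (forall z, V z -> exists r, 0 < r /\
     (forall s t, Rabs (s - re z) < r -> Rabs (t - im z) < r -> V (mkC s t))) ->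
  is_open V.
Proof.
  intros H z Hz. destruct (H z Hz) as [r [Hr Hb]]. exists r. split; auto.
  intros [s t] Hw.
  pose proof (Cnorm_re (Csub (mkC s t) z)). pose proof (Cnorm_im (Csub (mkC s t) z)).
  simpl in *. apply Hb; unfold Rminus; lra.
Qed.

Lemma has_pd_local U d F G z l : is_open U -> (forall w, U w -> F w = G w) -> U z ->
  has_pd d F z l -> has_pd d G z l.
Proof.
  intros HU HFG Hz. destruct z as [x y].
  destruct (open_square U x y HU Hz) as [r [Hr Hb]].
  assert (R0 : forall u, Rabs (u - u) < r)
    by (intros u; replace (u - u) with 0 by ring; rewrite Rabs_R0; lra).
  assert (Hx : forall t, x - r < t < x + r -> F (mkC t y) = G (mkC t y))
    by (intros t Ht; apply HFG, Hb; auto; apply Rabs_def1; lra).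
  assert (Hy : forall t, y - r < t < y + r -> F (mkC x t) = G (mkC x t))
    by (intros t Ht; apply HFG, Hb; auto; apply Rabs_def1; lra).
  destruct d; simpl; unfold has_pdx, has_pdy; simpl; intros [A B]; split.
  1-2: eapply (derivable_pt_lim_locally_ext _ _ _ (x - r) (x + r)); [lra | | eassumption];
       intros t Ht; simpl; rewrite Hx; auto.
  1-2: eapply (derivable_pt_lim_locally_ext _ _ _ (y - r) (y + r)); [lra | | eassumption];
       intros t Ht; simpl; rewrite Hy; auto.
Qed.

Lemma pd_local U d F G z : is_open U -> (forall w, U w -> F w = G w) -> U z ->
  pd d F z = pd d G z.
Proof.
  intros HU HFG Hz. unfold pd. f_equal. apply functional_extensionality. intro l.
  apply propositional_extensionality.
  split; apply has_pd_local with U; auto. intros; symmetry; auto.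
Qed.

(** * Schwarz's theorem: continuous mixed partials commute *)

Section Schwarz.
Variables phi px py pxy pyx : R -> R -> R.
Variables x y r : R.
Hypothesis derivs : forall s t, Rabs (s - x) < r -> Rabs (t - y) < r ->
  derivable_pt_lim (fun u => phi u t) s (px s t) /\
  derivable_pt_lim (fun u => phi s u) t (py s t) /\
  derivable_pt_lim (fun u => px s u) t (pxy s t) /\
  derivable_pt_lim (fun u => py u t) s (pyx s t).

(** Applying the mean value theorem twice, in either order, to the second
    difference phi(x+h,y+h) - phi(x+h,y) - phi(x,y+h) + phi(x,y) gives
    points of the square [x,x+h]x[y,y+h] where pxy and pyx agree. *)
Lemma mixed_partials_meet h : 0 < h < r ->
  exists xi eta xi' eta', x <= xi <= x + h /\ y <= eta <= y + h /\
    x <= xi' <= x + h /\ y <= eta' <= y + h /\ pxy xi eta = pyx xi' eta'.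
Proof.
  intros Hh.
  assert (In : forall a b, a <= b <= a + h -> Rabs (b - a) < r)
    by (intros a b Hb; rewrite Rabs_right by lra; lra).
  destruct (MVT_cor2 (fun s => phi s (y + h) - phi s y) (fun s => px s (y + h) - px s y) x (x + h))
    as [xi [E1 Hxi]];
    [lra | intros c Hc; apply derivable_pt_lim_minus; apply derivs; apply In; lra |].
  destruct (MVT_cor2 (fun t => px xi t) (fun t => pxy xi t) y (y + h))
    as [eta [E2 Heta]]; [lra | intros c Hc; apply derivs; apply In; lra |].
  destruct (MVT_cor2 (fun t => phi (x + h) t - phi x t) (fun t => py (x + h) t - py x t) y (y + h))
    as [eta' [E3 Heta']];
    [lra | intros c Hc; apply derivable_pt_lim_minus; apply derivs; apply In; lra |].
  destruct (MVT_cor2 (fun s => py s eta') (fun s => pyx s eta') x (x + h))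
    as [xi' [E4 Hxi']]; [lra | intros c Hc; apply derivs; apply In; lra |].
  exists xi, eta, xi', eta'. repeat split; try lra.
  replace (x + h - x) with h in * by ring. replace (y + h - y) with h in * by ring.
  assert (E : pxy xi eta * h * h = pyx xi' eta' * h * h) by (rewrite <- E2, <- E4; nra).
  apply Rmult_eq_reg_r with h; [apply Rmult_eq_reg_r with h|]; lra.
Qed.

Lemma schwarz_R :
  0 < r ->
  (forall e, 0 < e -> exists del, 0 < del /\ forall s t, Rabs (s - x) < del -> Rabs (t - y) < del ->
     Rabs (pxy s t - pxy x y) < e /\ Rabs (pyx s t - pyx x y) < e) ->
  pxy x y = pyx x y.
Proof.
  intros Hr Hcont.
  assert (Close : forall e, 0 < e -> Rabs (pxy x y - pyx x y) < 2 * e).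
  { intros e He. destruct (Hcont e He) as [del [Hdel Hc]].
    destruct (mixed_partials_meet (Rmin del r / 2)) as (xi & eta & xi' & eta' & H1 & H2 & H3 & H4 & Eq).
    { pose proof (Rmin_r del r). pose proof (Rmin_glb_lt del r 0 Hdel Hr). lra. }
    pose proof (Rmin_l del r).
    assert (In : forall a b, a <= b <= a + Rmin del r / 2 -> Rabs (b - a) < del).
    { intros a b Hb. rewrite Rabs_right; lra. }
    destruct (Hc xi eta) as [C1 _]; [apply In; lra | apply In; lra |].
    destruct (Hc xi' eta') as [_ C2]; [apply In; lra | apply In; lra |].
    rewrite Eq in C1.
    replace (pxy x y - pyx x y) with ((pyx xi' eta' - pyx x y) - (pyx xi' eta' - pxy x y)) by ring.
    eapply Rle_lt_trans; [apply Rabs_triang|]. rewrite Rabs_Ropp. lra. }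
  destruct (Req_dec (pxy x y - pyx x y) 0) as [E|Hne]; [lra|].
  exfalso. pose proof (Rabs_pos_lt _ Hne).
  specialize (Close (Rabs (pxy x y - pyx x y) / 4) ltac:(lra)). lra.
Qed.
End Schwarz.

Lemma cont_at_coords G x y : cont_at G (mkC x y) ->
  forall e, 0 < e -> exists del, 0 < del /\ forall s t, Rabs (s - x) < del -> Rabs (t - y) < del ->
     Rabs (re (G (mkC s t)) - re (G (mkC x y))) < e /\ Rabs (im (G (mkC s t)) - im (G (mkC x y))) < e.
Proof.
  intros HC e He. destruct (HC e He) as [del [Hd Hc]]. exists (del / 2). split; [lra|].
  intros s t Hs Ht.
  assert (Hn : Cnorm (Csub (G (mkC s t)) (G (mkC x y))) < e).
  { apply Hc. eapply Rle_lt_trans; [apply Cnorm_le|]. simpl. unfold Rminus in Hs, Ht. lra. }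
  pose proof (Cnorm_re (Csub (G (mkC s t)) (G (mkC x y)))).
  pose proof (Cnorm_im (Csub (G (mkC s t)) (G (mkC x y)))).
  simpl in *. unfold Rminus. split; lra.
Qed.

Lemma near_both (P Q : R -> R -> Prop) x y :
  (exists d, 0 < d /\ forall s t, Rabs (s - x) < d -> Rabs (t - y) < d -> P s t) ->
  (exists d, 0 < d /\ forall s t, Rabs (s - x) < d -> Rabs (t - y) < d -> Q s t) ->
  exists d, 0 < d /\ forall s t, Rabs (s - x) < d -> Rabs (t - y) < d -> P s t /\ Q s t.
Proof.
  intros [d1 [Hd1 H1]] [d2 [Hd2 H2]]. exists (Rmin d1 d2). split; [apply Rmin_pos; auto|].
  intros s t Hs Ht. pose proof (Rmin_l d1 d2). pose proof (Rmin_r d1 d2).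
  split; [apply H1 | apply H2]; lra.
Qed.

Lemma schwarz U F z : is_open U -> U z ->
  (forall w, U w -> ex_pd true F w /\ ex_pd false F w /\
     ex_pd false (pd true F) w /\ ex_pd true (pd false F) w) ->
  cont_at (pd false (pd true F)) z -> cont_at (pd true (pd false F)) z ->
  pd false (pd true F) z = pd true (pd false F) z.
Proof.
  intros HU Hz HD C1 C2. destruct z as [x y].
  destruct (open_square U x y HU Hz) as [r [Hr Hb]].
  assert (HD' : forall s t, Rabs (s - x) < r -> Rabs (t - y) < r ->
    has_pd true F (mkC s t) (pd true F (mkC s t)) /\
    has_pd false F (mkC s t) (pd false F (mkC s t)) /\
    has_pd false (pd true F) (mkC s t) (pd false (pd true F) (mkC s t)) /\
    has_pd true (pd false F) (mkC s t) (pd true (pd false F) (mkC s t))).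
  { intros s t Hs Ht. destruct (HD _ (Hb s t Hs Ht)) as (A & B & C & D).
    split; [|split; [|split]]; apply pd_spec; auto. }
  assert (Hcont := fun e He => near_both _ _ x y
             (cont_at_coords _ _ _ C1 e He) (cont_at_coords _ _ _ C2 e He)).
  apply Cx_eq.
  - apply (schwarz_R (fun s t => re (F (mkC s t))) (fun s t => re (pd true F (mkC s t)))
      (fun s t => re (pd false F (mkC s t))) (fun s t => re (pd false (pd true F) (mkC s t)))
      (fun s t => re (pd true (pd false F) (mkC s t))) x y r); auto.
    + intros s t Hs Ht. destruct (HD' s t Hs Ht) as ([A _] & [B _] & [C _] & [D _]). auto.
    + intros e He. destruct (Hcont e He) as [d [Hd Q]]. exists d. split; auto.
      intros s t Hs Ht. destruct (Q s t Hs Ht) as [[? _] [? _]]. auto.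
  - apply (schwarz_R (fun s t => im (F (mkC s t))) (fun s t => im (pd true F (mkC s t)))
      (fun s t => im (pd false F (mkC s t))) (fun s t => im (pd false (pd true F) (mkC s t)))
      (fun s t => im (pd true (pd false F) (mkC s t))) x y r); auto.
    + intros s t Hs Ht. destruct (HD' s t Hs Ht) as ([_ A] & [_ B] & [_ C] & [_ D]). auto.
    + intros e He. destruct (Hcont e He) as [d [Hd Q]]. exists d. split; auto.
      intros s t Hs Ht. destruct (Q s t Hs Ht) as [[_ ?] [_ ?]]. auto.
Qed.

(** * Regular functions on an open set

    This is
    what the computation needs from smoothness; unlike [smooth_on] it is
    closed under the field operations without any continuity bookkeeping. *)

Section Regular.
Variable U : Cx -> Prop.
Hypothesis HU : is_open U.

Fixpoint regular_to (n : nat) (F : Cx -> Cx) : Prop :=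
  match n with
  | O => True
  | S m =>
      (forall z, U z -> (forall d, ex_pd d F z) /\ (forall d d', ex_pd d' (pd d F) z) /\
                        pd false (pd true F) z = pd true (pd false F) z) /\
      forall d, regular_to m (pd d F)
  end.

Definition regular (F : Cx -> Cx) : Prop := forall n, regular_to n F.

Lemma regular_to_pred n F : regular_to (S n) F -> regular_to n F.
Proof.
  revert F; induction n; intros F H; [exact I|]. destruct H as [H1 H2]. split.
  - intros z Hz. destruct (H1 z Hz) as (A & B & C). auto.
  - intros d. apply IHn, H2.
Qed.

Lemma regular_to_local n F G : (forall w, U w -> F w = G w) -> regular_to n F -> regular_to n G.
Proof.
  revert F G; induction n; intros F G E H; [exact I|]. destruct H as [H1 H2].
  assert (Ed : forall d w, U w -> pd d F w = pd d G w) by (intros; apply pd_local with U; auto).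
  split.
  - intros z Hz. destruct (H1 z Hz) as (A & B & C). split; [|split].
    + intros d. destruct (A d) as [l Hl]. exists l. apply has_pd_local with U F; auto.
    + intros d d'. destruct (B d d') as [l Hl]. exists l. apply has_pd_local with U (pd d F); auto.
    + rewrite <- (pd_local U false (pd true F) (pd true G) z HU (Ed true) Hz).
      rewrite <- (pd_local U true (pd false F) (pd false G) z HU (Ed false) Hz). exact C.
  - intros d. apply IHn with (pd d F); auto.
Qed.

Lemma regular_to_step n G (D : bool -> Cx -> Cx) (D2 : bool -> bool -> Cx -> Cx) :
  (forall d z, U z -> has_pd d G z (D d z)) ->
  (forall d d' z, U z -> has_pd d' (D d) z (D2 d d' z)) ->
  (forall z, U z -> D2 true false z = D2 false true z) ->
  (forall d, regular_to n (D d)) -> regular_to (S n) G.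
Proof.
  intros H1 H2 Hsym Hn.
  assert (E : forall d w, U w -> D d w = pd d G w) by (intros; symmetry; apply pd_val; auto).
  split.
  - intros z Hz. split; [|split].
    + intros d. exists (D d z). auto.
    + intros d d'. exists (D2 d d' z). apply has_pd_local with U (D d); auto.
    + rewrite <- (pd_local U false (D true) (pd true G) z HU (E true) Hz).
      rewrite <- (pd_local U true (D false) (pd false G) z HU (E false) Hz).
      rewrite (pd_val _ _ _ _ (H2 true false z Hz)), (pd_val _ _ _ _ (H2 false true z Hz)).
      auto.
  - intros d. apply regular_to_local with (D d); auto.
Qed.

Lemma pd_const d c : pd d (fun _ => c) = fun _ => C0.
Proof. apply functional_extensionality. intros z. apply pd_val. apply has_pd_const. Qed.

Lemma regular_to_const n c : regular_to n (fun _ => c).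
Proof.
  revert c; induction n; intros c; [exact I|].
  apply regular_to_step with (fun _ _ => C0) (fun _ _ _ => C0); auto using has_pd_const.
Qed.

Lemma regular_to_add n F G : regular_to n F -> regular_to n G ->
  regular_to n (fun w => Cadd (F w) (G w)).
Proof.
  revert F G; induction n; intros F G HF HG; [exact I|].
  destruct HF as [F1 F2], HG as [G1 G2].
  apply regular_to_step with (fun d w => Cadd (pd d F w) (pd d G w))
    (fun d d' z => Cadd (pd d' (pd d F) z) (pd d' (pd d G) z)); auto.
  - intros d z Hz. apply has_pd_add; apply pd_spec; [apply F1 | apply G1]; auto.
  - intros d d' z Hz. apply has_pd_add; apply pd_spec; [apply F1 | apply G1]; auto.
  - intros z Hz. rewrite (proj2 (proj2 (F1 z Hz))), (proj2 (proj2 (G1 z Hz))). reflexivity.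
Qed.

Lemma regular_to_mul n F G : regular_to n F -> regular_to n G ->
  regular_to n (fun w => Cmul (F w) (G w)).
Proof.
  revert F G; induction n; intros F G HF HG; [exact I|].
  pose proof (regular_to_pred _ _ HF) as HF'. pose proof (regular_to_pred _ _ HG) as HG'.
  destruct HF as [F1 F2], HG as [G1 G2].
  apply regular_to_step with
    (fun d w => Cadd (Cmul (pd d F w) (G w)) (Cmul (F w) (pd d G w)))
    (fun d d' z => Cadd (Cadd (Cmul (pd d' (pd d F) z) (G z)) (Cmul (pd d F z) (pd d' G z)))
                        (Cadd (Cmul (pd d' F z) (pd d G z)) (Cmul (F z) (pd d' (pd d G) z)))).
  - intros d z Hz. apply has_pd_mul; apply pd_spec; [apply F1 | apply G1]; auto.
  - intros d d' z Hz. destruct (F1 z Hz) as (FA & FB & _), (G1 z Hz) as (GA & GB & _).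
    apply has_pd_add; apply has_pd_mul; apply pd_spec; auto.
  - intros z Hz. rewrite (proj2 (proj2 (F1 z Hz))), (proj2 (proj2 (G1 z Hz))). ring.
  - intros d. apply regular_to_add; apply IHn; auto.
Qed.

Lemma regular_to_conj n F : regular_to n F -> regular_to n (fun w => Cconj (F w)).
Proof.
  revert F; induction n; intros F HF; [exact I|].
  destruct HF as [F1 F2].
  apply regular_to_step with (fun d w => Cconj (pd d F w))
    (fun d d' z => Cconj (pd d' (pd d F) z)); auto.
  - intros d z Hz. apply has_pd_conj, pd_spec, F1; auto.
  - intros d d' z Hz. apply has_pd_conj, pd_spec, F1; auto.
  - intros z Hz. rewrite (proj2 (proj2 (F1 z Hz))). reflexivity.
Qed.

Definition inv_deriv (G : Cx -> Cx) (d : bool) (w : Cx) : Cx :=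
  Copp (Cmul (pd d G w) (Cmul (Cinv (G w)) (Cinv (G w)))).

Lemma regular_to_inv n G : (forall w, U w -> G w <> C0) -> regular_to n G ->
  regular_to n (fun w => Cinv (G w)).
Proof.
  intros Hnz. revert G Hnz; induction n; intros G Hnz HG; [exact I|].
  pose proof (regular_to_pred _ _ HG) as HG'.
  destruct HG as [G1 G2].
  assert (HI : forall d z, U z -> has_pd d (fun w => Cinv (G w)) z (inv_deriv G d z))
    by (intros d z Hz; apply has_pd_inv; auto; apply pd_spec, G1; auto).
  apply regular_to_step with (inv_deriv G)
    (fun d d' z => Copp (Cadd (Cmul (pd d' (pd d G) z) (Cmul (Cinv (G z)) (Cinv (G z))))
       (Cmul (pd d G z) (Cadd (Cmul (inv_deriv G d' z) (Cinv (G z)))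
                              (Cmul (Cinv (G z)) (inv_deriv G d' z)))))); auto.
  - intros d d' z Hz.
    change (has_pd d' (fun w => Copp (Cmul (pd d G w) (Cmul (Cinv (G w)) (Cinv (G w))))) z
                   (Copp (Cadd (Cmul (pd d' (pd d G) z) (Cmul (Cinv (G z)) (Cinv (G z))))
                     (Cmul (pd d G z) (Cadd (Cmul (inv_deriv G d' z) (Cinv (G z)))
                                            (Cmul (Cinv (G z)) (inv_deriv G d' z))))))).
    apply has_pd_opp.
    apply (has_pd_mul d' (pd d G) (fun w => Cmul (Cinv (G w)) (Cinv (G w)))).
    + apply pd_spec, G1; auto.
    + apply (has_pd_mul d' (fun w => Cinv (G w)) (fun w => Cinv (G w))); apply HI; auto.
  - intros z Hz. unfold inv_deriv. rewrite (proj2 (proj2 (G1 z Hz))). ring.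
  - intros d. unfold inv_deriv.
    apply regular_to_local
      with (fun w => Cmul (CR (-1)) (Cmul (pd d G w) (Cmul (Cinv (G w)) (Cinv (G w))))).
    { intros; cx; ring. }
    apply regular_to_mul; [apply regular_to_const|].
    apply regular_to_mul; [apply G2|]. apply regular_to_mul; apply IHn; auto.
Qed.

Lemma regular_const c : regular (fun _ => c).
Proof. intros n. apply regular_to_const. Qed.
Lemma regular_local F G : (forall w, U w -> F w = G w) -> regular F -> regular G.
Proof. intros E HF n. apply regular_to_local with F; auto. Qed.
Lemma regular_add F G : regular F -> regular G -> regular (fun w => Cadd (F w) (G w)).
Proof. intros HF HG n. apply regular_to_add; auto. Qed.
Lemma regular_mul F G : regular F -> regular G -> regular (fun w => Cmul (F w) (G w)).
Proof. intros HF HG n. apply regular_to_mul; auto. Qed.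
Lemma regular_conj F : regular F -> regular (fun w => Cconj (F w)).
Proof. intros HF n. apply regular_to_conj; auto. Qed.
Lemma regular_inv F : (forall w, U w -> F w <> C0) -> regular F -> regular (fun w => Cinv (F w)).
Proof. intros Hnz HF n. apply regular_to_inv; auto. Qed.
Lemma regular_pd d F : regular F -> regular (pd d F).
Proof. intros HF n. apply (proj2 (HF (S n))). Qed.

Lemma regular_opp F : regular F -> regular (fun w => Copp (F w)).
Proof.
  intros HF. apply regular_local with (fun w => Cmul (CR (-1)) (F w)); [intros; cx; ring|].
  apply regular_mul; auto using regular_const.
Qed.
Lemma regular_sub F G : regular F -> regular G -> regular (fun w => Csub (F w) (G w)).
Proof. intros HF HG. apply regular_add; auto using regular_opp. Qed.
Lemma regular_div F G : (forall w, U w -> G w <> C0) -> regular F -> regular G ->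
  regular (fun w => Cdiv (F w) (G w)).
Proof. intros Hnz HF HG. apply regular_mul; auto using regular_inv. Qed.
Lemma regular_sum n (F : nat -> Cx -> Cx) : (forall i, (i < n)%nat -> regular (F i)) ->
  regular (fun w => Csum n (fun i => F i w)).
Proof.
  induction n; intros H; simpl; [apply regular_const|].
  apply regular_add; [apply IHn; intros; apply H|apply H]; lia.
Qed.
Lemma regular_wd F : regular F -> regular (wd F).
Proof.
  intros HF. unfold wd. apply regular_mul; [apply regular_const|].
  apply regular_sub; [apply regular_pd; auto|].
  apply regular_mul; [apply regular_const | apply regular_pd; auto].
Qed.

Lemma regular_ex_pd F z d : regular F -> U z -> ex_pd d F z.
Proof. intros HF Hz. exact (proj1 (proj1 (HF 1%nat) z Hz) d). Qed.

(** smooth functions are regular (Schwarz's theorem at every order) *)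
Lemma regular_of_smooth F : smooth_on U F -> regular F.
Proof.
  intros [Hex Hcont] n.
  enough (H : forall w, regular_to n (iterpd w F)) by exact (H nil).
  induction n; intros w; [exact I|]. split.
  - intros z Hz. split; [|split].
    + intros d. apply (Hex w d z Hz).
    + intros d d'. apply (Hex (d :: w) d' z Hz).
    + apply schwarz with U; auto.
      * intros w' Hw'. repeat split.
        apply (Hex w true w' Hw'). apply (Hex w false w' Hw').
        apply (Hex (true :: w) false w' Hw'). apply (Hex (false :: w) true w' Hw').
      * apply (Hcont (false :: true :: w) z Hz).
      * apply (Hcont (true :: false :: w) z Hz).
  - intros d. apply (IHn (d :: w)).
Qed.
End Regular.

(** * Wirtinger calculus *)

Section WirtingerRules.
Variables F G : Cx -> Cx.
Variable z : Cx.
Hypothesis HF : forall d, ex_pd d F z.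
Hypothesis HG : forall d, ex_pd d G z.

Local Tactic Notation "rule" uconstr(H) := unfold wd, wdbar; rewrite !(pd_val _ _ z _ H); ring.

Lemma wd_add : wd (fun w => Cadd (F w) (G w)) z = Cadd (wd F z) (wd G z).
Proof. rule (has_pd_add _ _ _ z _ _ (pd_spec _ _ _ (HF _)) (pd_spec _ _ _ (HG _))). Qed.
Lemma wdbar_sub : wdbar (fun w => Csub (F w) (G w)) z = Csub (wdbar F z) (wdbar G z).
Proof. rule (has_pd_sub _ _ _ z _ _ (pd_spec _ _ _ (HF _)) (pd_spec _ _ _ (HG _))). Qed.
Lemma wd_opp : wd (fun w => Copp (F w)) z = Copp (wd F z).
Proof. rule (has_pd_opp _ _ z _ (pd_spec _ _ _ (HF _))). Qed.
Lemma wd_mul : wd (fun w => Cmul (F w) (G w)) z = Cadd (Cmul (wd F z) (G z)) (Cmul (F z) (wd G z)).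
Proof. rule (has_pd_mul _ _ _ z _ _ (pd_spec _ _ _ (HF _)) (pd_spec _ _ _ (HG _))). Qed.
Lemma wdbar_mul :
  wdbar (fun w => Cmul (F w) (G w)) z = Cadd (Cmul (wdbar F z) (G z)) (Cmul (F z) (wdbar G z)).
Proof. rule (has_pd_mul _ _ _ z _ _ (pd_spec _ _ _ (HF _)) (pd_spec _ _ _ (HG _))). Qed.
Lemma wd_inv : F z <> C0 ->
  wd (fun w => Cinv (F w)) z = Copp (Cmul (wd F z) (Cmul (Cinv (F z)) (Cinv (F z)))).
Proof. intro H. rule (has_pd_inv _ _ z _ H (pd_spec _ _ _ (HF _))). Qed.
Lemma wdbar_inv : F z <> C0 ->
  wdbar (fun w => Cinv (F w)) z = Copp (Cmul (wdbar F z) (Cmul (Cinv (F z)) (Cinv (F z)))).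
Proof. intro H. rule (has_pd_inv _ _ z _ H (pd_spec _ _ _ (HF _))). Qed.

Lemma wd_conj : wd (fun w => Cconj (F w)) z = Cconj (wdbar F z).
Proof.
  unfold wd, wdbar. rewrite !(pd_val _ _ z _ (has_pd_conj _ _ z _ (pd_spec _ _ _ (HF _)))).
  autorewrite with cconj. ring.
Qed.
Lemma wdbar_conj : wdbar (fun w => Cconj (F w)) z = Cconj (wd F z).
Proof.
  unfold wd, wdbar. rewrite !(pd_val _ _ z _ (has_pd_conj _ _ z _ (pd_spec _ _ _ (HF _)))).
  autorewrite with cconj. ring.
Qed.
End WirtingerRules.

Lemma wd_const c z : wd (fun _ => c) z = C0.
Proof. unfold wd. rewrite !pd_const. cx; ring. Qed.

Section WirtingerOnU.
Variable U : Cx -> Prop.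
Hypothesis HU : is_open U.
Variable z : Cx.
Hypothesis Hz : U z.

Lemma wd_local A B : (forall w, U w -> A w = B w) -> wd A z = wd B z.
Proof. intros E. unfold wd. rewrite !(pd_local U _ A B z HU E Hz). reflexivity. Qed.

Lemma wd_sum n (F : nat -> Cx -> Cx) : (forall i, (i < n)%nat -> regular U (F i)) ->
  wd (fun w => Csum n (fun i => F i w)) z = Csum n (fun i => wd (F i) z).
Proof.
  induction n; intros H; simpl; [apply wd_const|].
  rewrite wd_add; [rewrite IHn by (intros; apply H; lia); reflexivity| |];
  intros d; apply (regular_ex_pd U); auto.
  apply (regular_sum U HU). intros; apply H; lia.
Qed.

Lemma wd_wdbar_comm F : regular U F -> wdbar (wd F) z = wd (wdbar F) z.
Proof.
  intros HF. destruct (proj1 (HF 1%nat) z Hz) as (A & B & C).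
  assert (E1 : forall d, pd d (wd F) z =
     Cmul (CR (/2)) (Csub (pd d (pd true F) z) (Cmul Ci (pd d (pd false F) z)))).
  { intros d. unfold wd. apply pd_val. eapply has_pd_eq.
    - apply has_pd_mul; [apply has_pd_const | apply has_pd_sub; [apply pd_spec; auto |
        apply has_pd_mul; [apply has_pd_const | apply pd_spec; auto]]].
    - cbv beta; ring. }
  assert (E2 : forall d, pd d (wdbar F) z =
     Cmul (CR (/2)) (Cadd (pd d (pd true F) z) (Cmul Ci (pd d (pd false F) z)))).
  { intros d. unfold wdbar. apply pd_val. eapply has_pd_eq.
    - apply has_pd_mul; [apply has_pd_const | apply has_pd_add; [apply pd_spec; auto |
        apply has_pd_mul; [apply has_pd_const | apply pd_spec; auto]]].
    - cbv beta; ring. }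
  unfold wd at 2, wdbar at 1. rewrite !E1, !E2, C. ring.
Qed.

Lemma regular_inner N (g h : Cx -> Vec) :
  (forall c, (c < N)%nat -> regular U (fun w => g w c)) ->
  (forall c, (c < N)%nat -> regular U (fun w => h w c)) ->
  regular U (fun w => inner N (g w) (h w)).
Proof.
  intros Hg Hh. unfold inner. apply (regular_sum U HU). intros c Hc.
  apply (regular_mul U HU); auto. apply (regular_conj U HU); auto.
Qed.

Lemma wd_inner N (g h : Cx -> Vec) :
  (forall c, (c < N)%nat -> regular U (fun w => g w c)) ->
  (forall c, (c < N)%nat -> regular U (fun w => h w c)) ->
  wd (fun w => inner N (g w) (h w)) z =
  Cadd (inner N (fun c => wdbar (fun w => g w c) z) (h z))
       (inner N (g z) (fun c => wd (fun w => h w c) z)).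
Proof.
  intros Hg Hh. unfold inner. rewrite wd_sum.
  - rewrite <- Csum_add. apply Csum_ext. intros c Hc.
    rewrite wd_mul, wd_conj; auto; intros d; apply (regular_ex_pd U); auto.
    apply (regular_conj U HU); auto.
  - intros c Hc. apply (regular_mul U HU); auto. apply (regular_conj U HU); auto.
Qed.

Lemma wdbar_inner N (g h : Cx -> Vec) :
  (forall c, (c < N)%nat -> regular U (fun w => g w c)) ->
  (forall c, (c < N)%nat -> regular U (fun w => h w c)) ->
  wdbar (fun w => inner N (g w) (h w)) z =
  Cadd (inner N (fun c => wd (fun w => g w c) z) (h z))
       (inner N (g z) (fun c => wdbar (fun w => h w c) z)).
Proof.
  intros Hg Hh.
  rewrite <- (Cconj_involutive (wdbar _ z)), <- wd_conj
    by (intros d; apply (regular_ex_pd U); auto; apply regular_inner; auto).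
  rewrite (wd_local _ (fun w => inner N (h w) (g w))) by (intros; apply inner_conj).
  rewrite wd_inner by auto. autorewrite with cconj. rewrite !inner_conj. ring.
Qed.
End WirtingerOnU.

(** * The harmonic sequence f_j = P_+^j f *)

Section Harmonic.
Variable N : nat.
Variable U : Cx -> Prop.
Variable f : Cx -> Vec.
Variable k : nat.
Hypothesis HU : is_open U.
Hypothesis Hhol : holomorphic_on N U f.
Hypothesis Hnz : forall j, (j <= k)%nat -> nowhere_zero_on N U (fj N f j).

Definition comp j c : Cx -> Cx := fun w => fj N f j w c.
Definition nrm j w := inner N (fj N f j w) (fj N f j w).
Definition alpha j w := Cdiv (inner N (fj N f j w) (fun c => wd (comp j c) w)) (nrm j w).

(** f_{j-1} and n_j / n_{j-1}, with the convention f_{-1} = 0 *)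
Definition prev j w : Vec := match j with O => fun _ => C0 | S i => fj N f i w end.
Definition beta j w := match j with O => C0 | S i => Cdiv (nrm (S i) w) (nrm i w) end.

Lemma wd_comp j c z : wd (comp j c) z = Cadd (fj N f (S j) z c) (Cmul (alpha j z) (fj N f j z c)).
Proof.
  change (fj N f (S j) z c) with (Csub (wd (comp j c) z) (Cmul (fj N f j z c) (alpha j z))).
  ring.
Qed.

Lemma nrm_nz j z : (j <= k)%nat -> U z -> nrm j z <> C0.
Proof. intros Hj Hz. destruct (Hnz j Hj z Hz) as [a [Ha Hfa]]. apply inner_self_nz with a; auto. Qed.

Lemma inner_wd_comp j z : (j <= k)%nat -> U z ->
  inner N (fj N f j z) (fun c => wd (comp j c) z) = Cmul (alpha j z) (nrm j z).
Proof. intros Hj Hz. unfold alpha. field. apply nrm_nz; auto. Qed.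

(** decompose a regularity goal along the field operations; the specific
    lemmas are tried before the generic ones they unfold to *)
Ltac reg := repeat first [ assumption
  | apply (regular_wd U HU)
  | apply (regular_div U HU); [intros; apply nrm_nz; auto; lia | |]
  | apply (regular_inv U HU); [intros; apply nrm_nz; auto; lia |]
  | apply (regular_inner U HU); intros ? ?
  | apply (regular_sub U HU) | apply (regular_opp U HU) | apply (regular_conj U HU)
  | apply (regular_add U HU) | apply (regular_mul U HU) | apply (regular_const U HU) ].

Lemma regular_comp j c : (j <= k)%nat -> (c < N)%nat -> regular U (comp j c).
Proof.
  revert c. induction j; intros c Hj Hc.
  - apply (regular_of_smooth U HU). apply (proj1 Hhol); auto.
  - assert (IH : forall b, (b < N)%nat -> regular U (comp j b)) by (intros; apply IHj; auto; lia).
    change (regular U (fun z => Csub (wd (comp j c) z) (Cmul (comp j c z) (alpha j z)))).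
    unfold alpha, nrm. reg; apply IH; auto.
Qed.

Lemma regular_nrm j : (j <= k)%nat -> regular U (nrm j).
Proof. intros Hj. unfold nrm. reg. all: apply regular_comp; auto. Qed.

Lemma regular_alpha j : (j <= k)%nat -> regular U (alpha j).
Proof. intros Hj. unfold alpha, nrm. reg. all: apply regular_comp; auto. Qed.

Ltac ex_pd_reg := intros ?d; apply (regular_ex_pd U); [|assumption].
Ltac regs := first [apply regular_comp | apply regular_nrm | apply regular_alpha
  | apply (regular_wd U HU); apply regular_comp]; auto; lia.

Lemma orth j z : (j <= k)%nat -> U z -> inner N (fj N f j z) (fj N f (S j) z) = C0.
Proof.
  intros Hj Hz.
  rewrite (inner_ext_r N _ _ (fun c => Cadd (wd (comp j c) z) (Cmul (Copp (alpha j z)) (fj N f j z c))))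
    by (intros; rewrite wd_comp; ring).
  rewrite inner_add_r, inner_scal_r, inner_wd_comp by auto. unfold nrm. ring.
Qed.

Lemma orth' j z : (j <= k)%nat -> U z -> inner N (fj N f (S j) z) (fj N f j z) = C0.
Proof. intros Hj Hz. rewrite <- inner_conj, orth by auto. apply Cconj_C0. Qed.

Lemma orth_prev j z : (j <= k)%nat -> U z -> inner N (prev j z) (fj N f j z) = C0.
Proof. intros Hj Hz. destruct j; simpl; [apply inner_zero_l | apply orth; auto; lia]. Qed.

Lemma orth_prev' j z : (j <= k)%nat -> U z -> inner N (fj N f j z) (prev j z) = C0.
Proof. intros Hj Hz. rewrite <- inner_conj, orth_prev by auto. apply Cconj_C0. Qed.

Definition bar_formula j := forall z c, U z -> (c < N)%nat ->
  wdbar (comp j c) z = Copp (Cmul (beta j z) (prev j z c)).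

Lemma wd_nrm j z : (j <= k)%nat -> U z -> bar_formula j -> wd (nrm j) z = Cmul (alpha j z) (nrm j z).
Proof.
  intros Hj Hz HB. unfold nrm at 1.
  rewrite (wd_inner U HU z Hz) by (intros; regs).
  rewrite (inner_ext_l N _ (fun c => Cmul (Copp (beta j z)) (prev j z c)))
    by (intros c Hc; change (wdbar (comp j c) z = Cmul (Copp (beta j z)) (prev j z c));
        rewrite (HB z c Hz Hc); ring).
  rewrite inner_scal_l, orth_prev, inner_wd_comp by auto. ring.
Qed.

(** ∂bar n_j = conj(alpha_j) n_j, since n_j is real *)
Lemma wdbar_nrm j z : (j <= k)%nat -> U z -> bar_formula j ->
  wdbar (nrm j) z = Cmul (Cconj (alpha j z)) (nrm j z).
Proof.
  intros Hj Hz HB.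
  transitivity (wdbar (fun w => Cconj (nrm j w)) z).
  { f_equal. apply functional_extensionality. intros. symmetry. apply inner_self_conj. }
  rewrite wdbar_conj by (ex_pd_reg; regs).
  rewrite wd_nrm, Cconj_mul by auto. f_equal. apply inner_self_conj.
Qed.

Lemma wdbar_wd_comp j z c : (j <= k)%nat -> U z -> (c < N)%nat ->
  (forall i, (i <= j)%nat -> bar_formula i) ->
  wdbar (wd (comp j c)) z =
  Copp (Cmul (beta j z) (Cadd (fj N f j z c) (Cmul (alpha j z) (prev j z c)))).
Proof.
  intros Hj Hz Hc HB.
  rewrite (wd_wdbar_comm U z Hz) by regs.
  rewrite (wd_local U HU z Hz _ (fun w => Copp (Cmul (beta j w) (prev j w c))))
    by (intros; apply HB; auto).
  destruct j as [|i]; cbn [beta prev].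
  - rewrite wd_const. ring.
  - assert (Hn1 : nrm i z <> C0) by (apply nrm_nz; auto; lia).
    assert (Hn2 : nrm (S i) z <> C0) by (apply nrm_nz; auto).
    unfold Cdiv. rewrite wd_opp, !wd_mul, wd_inv by (auto; ex_pd_reg; reg; regs).
    change (fun w => fj N f i w c) with (comp i c).
    rewrite wd_comp, (wd_nrm (S i)), (wd_nrm i) by (auto; lia).
    field. auto.
Qed.

Lemma wdbar_inner_wd_comp j z : (j <= k)%nat -> U z -> (forall i, (i <= j)%nat -> bar_formula i) ->
  wdbar (fun w => inner N (fj N f j w) (fun c => wd (comp j c) w)) z =
  Cadd (nrm (S j) z) (Cmul (Csub (Cmul (Cconj (alpha j z)) (alpha j z)) (beta j z)) (nrm j z)).
Proof.
  intros Hj Hz HB.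
  rewrite (wdbar_inner U HU z Hz N (fj N f j) (fun w c => wd (comp j c) w)) by (intros; regs).
  rewrite (inner_ext N _ (fun c => Cadd (fj N f (S j) z c) (Cmul (alpha j z) (fj N f j z c)))
                      _ (fun c => Cadd (fj N f (S j) z c) (Cmul (alpha j z) (fj N f j z c))))
    by (intros; apply wd_comp).
  rewrite (inner_ext_r N (fj N f j z) _ (fun c => Cadd (Cmul (Copp (beta j z)) (fj N f j z c))
                                            (Cmul (Copp (Cmul (beta j z) (alpha j z))) (prev j z c))))
    by (intros c Hc; etransitivity; [apply (wdbar_wd_comp j z c); auto | ring]).
  rewrite !inner_add_l, !inner_add_r, !inner_scal_l, !inner_scal_r.
  rewrite orth, orth', orth_prev' by auto. unfold nrm. ring.
Qed.

Lemma wdbar_alpha j z : (j <= k)%nat -> U z -> (forall i, (i <= j)%nat -> bar_formula i) ->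
  wdbar (alpha j) z = Csub (Cdiv (nrm (S j) z) (nrm j z)) (beta j z).
Proof.
  intros Hj Hz HB. assert (Hn : nrm j z <> C0) by (apply nrm_nz; auto).
  unfold alpha at 1, Cdiv at 1.
  rewrite wdbar_mul, wdbar_inv by (auto; ex_pd_reg; reg; regs).
  change (fun w => nrm j w) with (nrm j).
  rewrite wdbar_inner_wd_comp, wdbar_nrm, inner_wd_comp by auto.
  field. auto.
Qed.

Lemma bar_formula_succ j : (S j <= k)%nat -> (forall i, (i <= j)%nat -> bar_formula i) ->
  bar_formula (S j).
Proof.
  intros Hj HB z c Hz Hc. assert (Hn : nrm j z <> C0) by (apply nrm_nz; auto; lia).
  change (wdbar (fun w => Csub (wd (comp j c) w) (Cmul (comp j c w) (alpha j w))) z =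
          Copp (Cmul (beta (S j) z) (prev (S j) z c))).
  rewrite wdbar_sub, wdbar_mul by (ex_pd_reg; reg; regs).
  change (fun w => comp j c w) with (comp j c). change (fun w => alpha j w) with (alpha j).
  change (fun w => wd (comp j c) w) with (wd (comp j c)).
  rewrite wdbar_wd_comp, (HB j), wdbar_alpha by (auto; lia).
  cbn [prev beta]. unfold comp. field. auto.
Qed.

Lemma bar_formula_all j : (j <= k)%nat -> bar_formula j.
Proof.
  intros Hj. enough (H : forall i, (i <= j)%nat -> bar_formula i) by auto.
  induction j as [|j IH]; intros i Hi.
  - assert (i = 0%nat) as -> by lia. intros z c Hz Hc. cbn [prev beta].
    unfold comp. rewrite (proj2 Hhol) by auto. ring.
  - destruct (Nat.eq_dec i (S j)) as [->|Hne].
    + apply bar_formula_succ; auto. apply IH. lia.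
    + apply IH; lia.
Qed.

(** * Derivatives of the projectors P_j *)

Definition prev_nrm j w := match j with O => CR 1 | S i => nrm i w end.
Definition Amat j w : Mat := rank_one (fj N f (S j) w) (fj N f j w) (nrm j w).
Definition Aprev j w : Mat := rank_one (fj N f j w) (prev j w) (prev_nrm j w).

Lemma prev_nrm_nz j z : (j <= k)%nat -> U z -> prev_nrm j z <> C0.
Proof.
  intros Hj Hz. destruct j; simpl; [apply CR1_neq_C0 | apply nrm_nz; auto; lia].
Qed.

Lemma Pj_rank_one j w : Pj N f j w = rank_one (fj N f j w) (fj N f j w) (nrm j w).
Proof. reflexivity. Qed.

Lemma Pj_hermitian j w a b : Pj N f j w a b = Cconj (Pj N f j w b a).
Proof. unfold Pj. autorewrite with cconj. rewrite inner_self_conj. unfold Cdiv. ring. Qed.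

Lemma regular_Pj j a b : (j <= k)%nat -> (a < N)%nat -> (b < N)%nat ->
  regular U (fun w => Pj N f j w a b).
Proof.
  intros Hj Ha Hb.
  change (regular U (fun w => Cdiv (Cmul (comp j a w) (Cconj (comp j b w))) (nrm j w))).
  reg; regs.
Qed.

Lemma wd_Pj j z a b : (j <= k)%nat -> U z -> (a < N)%nat -> (b < N)%nat ->
  wd (fun w => Pj N f j w a b) z = Csub (Amat j z a b) (Aprev j z a b).
Proof.
  intros Hj Hz Ha Hb. assert (Hn : nrm j z <> C0) by (apply nrm_nz; auto).
  change (wd (fun w => Cmul (Cmul (comp j a w) (Cconj (comp j b w))) (Cinv (nrm j w))) z =
          Csub (Amat j z a b) (Aprev j z a b)).
  rewrite !wd_mul, wd_conj, wd_inv by (auto; ex_pd_reg; reg; regs).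
  change (fun w => comp j a w) with (comp j a). change (fun w => comp j b w) with (comp j b).
  change (fun w => nrm j w) with (nrm j).
  rewrite wd_comp, (bar_formula_all j Hj z b Hz Hb), wd_nrm by (auto; apply bar_formula_all; auto).
  unfold Amat, Aprev, rank_one, comp. destruct j as [|i]; cbn [prev beta prev_nrm].
  - autorewrite with cconj. field. split; auto using CR1_neq_C0.
  - assert (Hm : nrm i z <> C0) by (apply nrm_nz; auto; lia).
    autorewrite with cconj. unfold nrm. rewrite !inner_self_conj. fold (nrm i z) (nrm (S i) z).
    field. auto.
Qed.

(** [∂P_j, P_j] = A_j + A_{j-1}, by orthogonality of f_{j-1}, f_j, f_{j+1} *)
Lemma comm_wd_Pj j z a b : (j <= k)%nat -> U z -> (a < N)%nat -> (b < N)%nat ->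
  comm N (mwd (Pj N f j) z) (Pj N f j z) a b = Cadd (Amat j z a b) (Aprev j z a b).
Proof.
  intros Hj Hz Ha Hb.
  assert (Hn : nrm j z <> C0) by (apply nrm_nz; auto).
  assert (Hp : prev_nrm j z <> C0) by (apply prev_nrm_nz; auto).
  unfold comm.
  rewrite (mmul_sub_l N (mwd (Pj N f j) z) (Amat j z) (Aprev j z)) by (intros; apply wd_Pj; auto).
  rewrite (mmul_sub_r N (mwd (Pj N f j) z) (Amat j z) (Aprev j z)) by (intros; apply wd_Pj; auto).
  rewrite Pj_rank_one. unfold Amat, Aprev. rewrite !mmul_rank_one.
  rewrite orth, orth_prev by auto. fold (nrm j z).
  unfold rank_one. field. auto.
Qed.

(** ∂bar P_j is the adjoint of ∂ P_j, since P_j is Hermitian *)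
Lemma wdbar_Pj j z a b : (j <= k)%nat -> U z -> (a < N)%nat -> (b < N)%nat ->
  wdbar (fun w => Pj N f j w a b) z = Cconj (wd (fun w => Pj N f j w b a) z).
Proof.
  intros Hj Hz Ha Hb.
  replace (fun w => Pj N f j w a b) with (fun w => Cconj (Pj N f j w b a))
    by (apply functional_extensionality; intros; symmetry; apply Pj_hermitian).
  apply wdbar_conj. ex_pd_reg. apply regular_Pj; auto.
Qed.

Lemma telescope j z a b : Csum j (fun i => Csub (Amat i z a b) (Aprev i z a b)) = Aprev j z a b.
Proof.
  induction j as [|j IH]; simpl.
  - unfold Aprev, rank_one. simpl. rewrite Cconj_C0. unfold Cdiv. ring.
  - rewrite IH. change (Aprev (S j) z a b) with (Amat j z a b). ring.
Qed.

Lemma CR2 : CR 2 = Cadd (CR 1) (CR 1).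
Proof. cx; ring. Qed.

Lemma regular_Phi a b : (a < N)%nat -> (b < N)%nat -> regular U (fun w => Phi N f k w a b).
Proof.
  intros Ha Hb. unfold Phi.
  apply (regular_mul U HU); [apply (regular_const U HU)|].
  apply (regular_add U HU); [apply regular_Pj; auto|].
  apply (regular_mul U HU); [apply (regular_const U HU)|].
  apply (regular_sum U HU). intros. apply regular_Pj; auto; lia.
Qed.

(** the dξ-component: ∂Phi = A_k - A_{k-1} + 2 A_{k-1} = -i [∂P_k, P_k] *)
Lemma wd_Phi z a b : U z -> (a < N)%nat -> (b < N)%nat ->
  wd (fun w => Phi N f k w a b) z = omega_dxi N f k z a b.
Proof.
  intros Hz Ha Hb. unfold Phi, omega_dxi.
  rewrite wd_mul, wd_const, wd_add, wd_mul, wd_const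
    by (ex_pd_reg; first [apply (regular_const U HU) | apply regular_Pj; auto
          | apply (regular_sum U HU); intros; apply regular_Pj; auto; lia
          | apply (regular_add U HU); [apply regular_Pj; auto|]; apply (regular_mul U HU);
            [apply (regular_const U HU) | apply (regular_sum U HU); intros; apply regular_Pj; auto; lia]
          | apply (regular_mul U HU); [apply (regular_const U HU)|];
            apply (regular_sum U HU); intros; apply regular_Pj; auto; lia]).
  rewrite (wd_sum U HU z Hz) by (intros; apply regular_Pj; auto; lia).
  rewrite (Csum_ext k (fun i => wd (fun w => Pj N f i w a b) z)
                     (fun i => Csub (Amat i z a b) (Aprev i z a b)))
    by (intros; apply wd_Pj; auto; lia).
  rewrite telescope, wd_Pj, comm_wd_Pj by auto. rewrite CR2. ring.
Qed.

Lemma Phi_antihermitian w a b : Phi N f k w a b = Copp (Cconj (Phi N f k w b a)).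
Proof.
  unfold Phi. rewrite (Pj_hermitian k w a b).
  rewrite (Csum_ext k (fun j => Pj N f j w a b) (fun j => Cconj (Pj N f j w b a)))
    by (intros; apply Pj_hermitian).
  rewrite <- Csum_conj. autorewrite with cconj. ring.
Qed.

(** the dξbar-component follows from the dξ-component by taking adjoints *)
Lemma wdbar_Phi z a b : U z -> (a < N)%nat -> (b < N)%nat ->
  wdbar (fun w => Phi N f k w a b) z = omega_dxibar N f k z a b.
Proof.
  intros Hz Ha Hb.
  replace (fun w => Phi N f k w a b) with (fun w => Cconj (Copp (Phi N f k w b a)))
    by (apply functional_extensionality; intros;
        rewrite (Phi_antihermitian _ b a); autorewrite with cconj; ring).
  rewrite wdbar_conj, wd_opp, wd_Phi
    by (auto; ex_pd_reg; try apply (regular_opp U HU); apply regular_Phi; auto).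
  unfold omega_dxi, omega_dxibar.
  rewrite (comm_adjoint N (mwd (Pj N f k) z) (mwdbar (Pj N f k) z))
    by (intros; auto; first [apply wdbar_Pj; auto | apply Pj_hermitian]).
  autorewrite with cconj. ring.
Qed.
End Harmonic.

(** * Primitives of a 1-form are unique up to constants on a connected set *)

Lemma const_on_segment (g : R -> R) a b :
  (forall c, Rmin a b <= c <= Rmax a b -> derivable_pt_lim g c 0) -> g a = g b.
Proof.
  intros H. destruct (Rtotal_order a b) as [Hab|[->|Hab]]; [| reflexivity |].
  - destruct (MVT_cor2 g (fun _ => 0) a b Hab) as [c [E _]]; [|lra].
    intros c Hc. apply H. rewrite Rmin_left, Rmax_right by lra. lra.
  - destruct (MVT_cor2 g (fun _ => 0) b a Hab) as [c [E _]]; [|lra].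
    intros c Hc. apply H. rewrite Rmin_right, Rmax_left by lra. lra.
Qed.

Definition zero_partials (U : Cx -> Prop) (D : Cx -> Cx) : Prop :=
  forall z, U z -> has_pd true D z C0 /\ has_pd false D z C0.

(** zero partials make a function constant on a square around each point,
    moving first horizontally then vertically *)
Lemma locally_constant U D x y : is_open U -> U (mkC x y) -> zero_partials U D ->
  exists r, 0 < r /\ forall s t, Rabs (s - x) < r -> Rabs (t - y) < r ->
    U (mkC s t) /\ D (mkC s t) = D (mkC x y).
Proof.
  intros HU Hz HD. destruct (open_square U x y HU Hz) as [r [Hr Hb]]. exists r. split; auto.
  intros s t Hs Ht. split; auto.
  assert (Between : forall p q u, Rabs (p - u) < r -> Rabs (q - u) < r ->
            forall c, Rmin p q <= c <= Rmax p q -> Rabs (c - u) < r).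
  { intros p q u Hp Hq c Hc. unfold Rmin, Rmax in Hc.
    apply Rabs_def2 in Hp. apply Rabs_def2 in Hq. apply Rabs_def1; destruct (Rle_dec p q); lra. }
  assert (Hx0 : Rabs (x - x) < r) by (replace (x - x) with 0 by ring; rewrite Rabs_R0; lra).
  assert (Hy0 : Rabs (y - y) < r) by (replace (y - y) with 0 by ring; rewrite Rabs_R0; lra).
  assert (Horiz : D (mkC s y) = D (mkC x y)).
  { apply Cx_eq; symmetry;
      [apply (const_on_segment (fun u => re (D (mkC u y)))) |
       apply (const_on_segment (fun u => im (D (mkC u y))))];
      intros c Hc; destruct (HD (mkC c y)) as [[A B] _]; eauto. }
  assert (Vert : D (mkC s t) = D (mkC s y)).
  { apply Cx_eq; symmetry;
      [apply (const_on_segment (fun u => re (D (mkC s u)))) |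
       apply (const_on_segment (fun u => im (D (mkC s u))))];
      intros c Hc; destruct (HD (mkC s c)) as [_ [A B]]; eauto. }
  congruence.
Qed.

(** on a connected open set, {D = D z0} and {D <> D z0} are open and
    disjoint, so the second one is empty *)
Lemma constant_on_connected U D z0 : is_open U -> is_connected U -> U z0 ->
  zero_partials U D -> forall z, U z -> D z = D z0.
Proof.
  intros HU HC Hz0 HD z Hz. apply NNPP. intro Hne.
  assert (Open : forall P : Cx -> Prop, (forall w w', P (D w) -> D w' = D w -> P (D w')) ->
            is_open (fun w => U w /\ P (D w))).
  { intros P HP. apply open_of_squares. intros [x y] [Hw Pw].
    destruct (locally_constant U D x y HU Hw HD) as [r [Hr Hb]]. exists r. split; auto.
    intros s t Hs Ht. destruct (Hb s t Hs Ht) as [Ust Est]. split; eauto. }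
  apply (HC (fun w => U w /\ D w = D z0) (fun w => U w /\ D w <> D z0)).
  - apply (Open (fun v => v = D z0)). congruence.
  - apply (Open (fun v => v <> D z0)). congruence.
  - intros w Hw. destruct (classic (D w = D z0)); auto.
  - intros w Hw [_ A] [_ B]. auto.
  - exists z0. auto.
  - exists z. auto.
Qed.

Lemma wirtinger_injective lx ly lx' ly' :
  Cmul (CR (/2)) (Csub lx (Cmul Ci ly)) = Cmul (CR (/2)) (Csub lx' (Cmul Ci ly')) ->
  Cmul (CR (/2)) (Cadd lx (Cmul Ci ly)) = Cmul (CR (/2)) (Cadd lx' (Cmul Ci ly')) ->
  lx = lx' /\ ly = ly'.
Proof.
  destruct lx, ly, lx', ly'. unfold Cmul, Csub, Cadd, Copp, CR, Ci. simpl.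
  intros E1 E2. injection E1. injection E2. intros.
  split; apply Cx_eq; simpl; lra.
Qed.

Lemma primitives_differ U X Y A Abar a b N : (a < N)%nat -> (b < N)%nat ->
  is_d_of N U X A Abar -> is_d_of N U Y A Abar ->
  zero_partials U (fun w => Csub (X w a b) (Y w a b)).
Proof.
  intros Ha Hb HX HY w Hw.
  destruct (HX w a b Hw Ha Hb) as (lx & ly & X1 & X2 & X3 & X4).
  destruct (HY w a b Hw Ha Hb) as (lx' & ly' & Y1 & Y2 & Y3 & Y4).
  destruct (wirtinger_injective lx ly lx' ly') as [-> ->]; try congruence.
  split; (eapply has_pd_eq; [apply has_pd_sub; eassumption | cx; ring]).
Qed.

Lemma is_d_of_wirtinger N U F A Abar :
  (forall z a b, U z -> (a < N)%nat -> (b < N)%nat ->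
     (forall d, ex_pd d (fun w => F w a b) z) /\
     A z a b = wd (fun w => F w a b) z /\ Abar z a b = wdbar (fun w => F w a b) z) ->
  is_d_of N U F A Abar.
Proof.
  intros H z a b Hz Ha Hb. destruct (H z a b Hz Ha Hb) as (Hex & EA & EAbar).
  exists (pd true (fun w => F w a b) z), (pd false (fun w => F w a b) z).
  exact (conj (pd_spec _ _ _ (Hex true)) (conj (pd_spec _ _ _ (Hex false)) (conj EA EAbar))).
Qed.

Theorem mainTheorem2 (N : nat) (U : Cx -> Prop) (f : Cx -> Vec) (k : nat) :
  is_open U ->
  holomorphic_on N U f ->
  nonconstant_on N U f ->
  (k + 2 <= N)%nat ->
  (forall j, (j <= k)%nat -> nowhere_zero_on N U (fj N f j)) ->
  is_d_of N U (Phi N f k) (omega_dxi N f k) (omega_dxibar N f k) /\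
  (is_connected U ->
   forall X : Cx -> Mat,
     is_d_of N U X (omega_dxi N f k) (omega_dxibar N f k) ->
     exists M : Mat, forall z a b, U z -> (a < N)%nat -> (b < N)%nat ->
       X z a b = Cadd (Phi N f k z a b) (M a b)).
Proof.
  intros HU Hhol Hnc Hk Hnz.
  assert (Hprim : is_d_of N U (Phi N f k) (omega_dxi N f k) (omega_dxibar N f k)).
  { apply (is_d_of_wirtinger N U). intros z a b Hz Ha Hb. split; [|split].
    - intros d. apply (regular_ex_pd U); auto. apply (regular_Phi N U f k); auto.
    - symmetry. apply (wd_Phi N U f k); auto.
    - symmetry. apply (wdbar_Phi N U f k); auto. }
  split; [exact Hprim|].
  (* any other primitive X differs from Phi by its value at a base point z0 of U *)
  intros HC X HX. destruct Hnc as (z0 & _ & _ & Hz0 & _).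
  exists (fun a b => Csub (X z0 a b) (Phi N f k z0 a b)).
  intros z a b Hz Ha Hb.
  pose proof (constant_on_connected U _ z0 HU HC Hz0
                (primitives_differ U X _ _ _ a b N Ha Hb HX Hprim) z Hz) as E.
  cbv beta in E. rewrite <- E. ring.
Qed.
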